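(* Let $n\ge 1$, $V=\mathbb F_2^n$, and let $\rho\in\mathrm{Sym}(V)\setminus\mathrm{AGL}(V)$ with $0\rho=0$. Let $\overline\rho\in\mathrm{Sym}(V\times V)$ be the map $(x,y)\overline\rho=(x+y,\ y+(x+y)\rho)$. Let $U\le V\times V$ be a subgroup, and suppose there are subgroups $A,B,C,D\le V$ and a group homomorphism $\varphi:A\to C$ such that $$U=\{(a,\ a\varphi+d)\mid a\in A,\ d\in D\}.$$ Assume that $U$ is a linear block for $\overline\rho$. Then: (1) $D\le A$; (2) $A\varphi\le A$; (3) $D\varphi\le D$.
   Context: Maps act on the right: $x\rho$ denotes the image of $x$ under $\rho$, and $fg$ means first $f$ then $g$. $\mathrm{Sym}(V)$ is the symmetric group on $V$, $\mathrm{AGL}(V)$ the group of affine permutations of $V$. A subgroup $U\le V\times V$ is a linear block for $f\in\mathrm{Sym}(V\times V)$ if for every $(v,w)\in V\times V$ there exists $(v',w')\in V\times V$ with $(U+(v,w))f=U+(v',w')$ (equivalently $(v',w')=(v,w)f$). The map $\overline\rho$ is a bijection with inverse $(x,y)\overline\rho^{-1}=(x+y+x\rho,\ y+x\rho)$. *)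

From HB Require Import structures.
From mathcomp Require Import all_boot all_order all_algebra all_fingroup.
Set Implicit Arguments.
Unset Strict Implicit.
Unset Printing Implicit Defensive.
Import GRing.Theory.
Local Open Scope ring_scope.

Notation V n := 'rV['F_2]_n.

Definition is_subgroup (n : nat) (A : {set V n}) : Prop :=
  0 \in A /\ (forall x y, x \in A -> y \in A -> x - y \in A).

(* phi : A -> C is a group homomorphism (phi given as a map on V, only its
   restriction to A matters). *)
Definition is_hom_on (n : nat) (A C : {set V n}) (phi : V n -> V n) : Prop :=
  (forall a, a \in A -> phi a \in C) /\
  (forall a b, a \in A -> b \in A -> phi (a + b) = phi a + phi b).

(* f : V -> V is affine: x |-> g x + b with g additive (= F_2-linear). *)
Definition is_affine (n : nat) (f : V n -> V n) : Prop :=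
  exists b : V n, forall x y, f (x + y) - b = (f x - b) + (f y - b).

Definition rhobar (n : nat) (rho : {perm V n}) (p : V n * V n) : V n * V n :=
  (p.1 + p.2, p.2 + rho (p.1 + p.2)).

Definition coset (n : nat) (U : {set V n * V n}) (p : V n * V n)
  : {set V n * V n} :=
  [set (u.1 + p.1, u.2 + p.2) | u in U].

Definition linear_block (n : nat) (U : {set V n * V n})
  (f : V n * V n -> V n * V n) : Prop :=
  forall p : V n * V n, exists q : V n * V n, f @: coset U p = coset U q.

From Pilot Require Import Defs.
From HB Require Import structures.
From mathcomp Require Import all_boot all_order all_algebra all_fingroup.
Import GRing.Theory.
Local Open Scope ring_scope.
Set Implicit Arguments.

(* U contains 0 and is closed
   under addition, so the blocks of the partition into cosets of U are the
   sets U + p, and the block through p = 0 is U itself.  Since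
   (0,0) rhobar = (0,0), the block U must be mapped onto the block through 0,
   that is  U rhobar = U  (lemma [block_through_zero_stable]).  The three
   claims then follow by evaluating rhobar on suitable elements of U, using
   that V = F_2^n has characteristic 2:
   (1) for d in D, (0,d) rhobar = (d, d + d rho) lies in U, so d lies in A;
   (2) for a in A, (a, a phi) rhobar has first coordinate a + a phi in A,
       hence a phi lies in A;
   (3) for d in D, write (0,d) = (a, a phi + e) rhobar with a in A, e in D;
       comparing coordinates gives a = a phi + e and d = a, so that
       d phi = d + e lies in D. *)

Lemma addvv (n : nat) (v : V n) : v + v = 0.
Proof.
apply/rowP => i; rewrite !mxE.
by rewrite -mulr2n -mulr_natr (pchar_Fp_0 (p:=2) erefl) mulr0.
Qed.

Lemma oppv (n : nat) (v : V n) : - v = v.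
Proof. by rewrite -[LHS]add0r -(addvv v) -addrA subrr addr0. Qed.

Lemma addv_eq0 (n : nat) (x y : V n) : x + y = 0 -> x = y.
Proof. by move=> /(congr1 (+%R^~ y)); rewrite /= -addrA addvv addr0 add0r. Qed.

Lemma subgroupD (n : nat) (A : {set V n}) (x y : V n) :
  is_subgroup A -> x \in A -> y \in A -> x + y \in A.
Proof. by move=> [_ subA] xA yA; rewrite -[y]oppv; apply: subA. Qed.

Section BlockThroughZero.

Variable n : nat.
Variable U : {set V n * V n}.
Hypothesis U0 : (0, 0) \in U.
Hypothesis UD : forall u v, u \in U -> v \in U -> (u.1 + v.1, u.2 + v.2) \in U.

Lemma coset_of_mem (q : V n * V n) : q \in U -> Defs.coset U q = U.
Proof.
move=> qU; apply/setP => w; apply/imsetP/idP => [[u uU ->]|wU]; first exact: UD.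
exists (w.1 + q.1, w.2 + q.2); first exact: UD.
by rewrite /= -!addrA !addvv !addr0; case: w {wU}.
Qed.

Lemma block_through_zero_stable (f : V n * V n -> V n * V n) :
  f (0, 0) = (0, 0) -> linear_block U f -> f @: U = U.
Proof.
move=> f0 block; have [q fUq] := block (0, 0).
rewrite coset_of_mem // in fUq; rewrite fUq.
have /imsetP [u uU [u1q u2q]] : (0, 0) \in Defs.coset U q by rewrite -fUq -f0 imset_f.
have -> : q = u.
  by case: q u1q u2q {fUq} => q1 q2 /= /esym/addv_eq0 <- /esym/addv_eq0 <-; case: u uU.
exact: coset_of_mem.
Qed.

End BlockThroughZero.

Section GraphSum.

Variable n : nat.
Variables A D : {set V n}.
Variable phi : V n -> V n.
Hypothesis hA : is_subgroup A.
Hypothesis hD : is_subgroup D.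
Hypothesis phiD : forall a b, a \in A -> b \in A -> phi (a + b) = phi a + phi b.

Definition graph_sum : {set V n * V n} := [set (a, phi a + d) | a in A, d in D].

Lemma A0 : 0 \in A. Proof. by case: hA. Qed.
Lemma D0 : 0 \in D. Proof. by case: hD. Qed.

Lemma phi0 : phi 0 = 0.
Proof. by have := phiD A0 A0; rewrite addr0 => /eqP; rewrite -subr_eq subrr => /eqP. Qed.

Lemma mem_graph_sum a d : a \in A -> d \in D -> (a, phi a + d) \in graph_sum.
Proof. exact: imset2_f. Qed.

Lemma graph_sumP u :
  u \in graph_sum -> exists2 a, a \in A & exists2 d, d \in D & u = (a, phi a + d).
Proof. by case/imset2P => a d aA dD ->; exists a => //; exists d. Qed.

Lemma graph_sum0 : (0, 0) \in graph_sum.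
Proof. by have := mem_graph_sum A0 D0; rewrite phi0 addr0. Qed.

Lemma graph_sumD u v : u \in graph_sum -> v \in graph_sum ->
  (u.1 + v.1, u.2 + v.2) \in graph_sum.
Proof.
case/graph_sumP => a aA [d dD ->]; case/graph_sumP => b bA [e eD ->] /=.
rewrite addrACA -phiD //.
by apply: mem_graph_sum; apply: subgroupD.
Qed.

Lemma graph_sum_fst u : u \in graph_sum -> u.1 \in A.
Proof. by case/graph_sumP => a aA [d _ ->]. Qed.

Variable rho : {perm V n}.
Hypothesis rho0 : rho 0 = 0.
Hypothesis stable : rhobar rho @: graph_sum = graph_sum.

Lemma rhobar_graph_sum u : u \in graph_sum -> rhobar rho u \in graph_sum.
Proof. by move=> uU; rewrite -stable imset_f. Qed.

(* (0,d) rhobar = (d, d + d rho) has first coordinate d. *)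
Lemma D_sub_A : D \subset A.
Proof.
apply/subsetP => d dD.
by have := graph_sum_fst (rhobar_graph_sum (mem_graph_sum A0 dD)); rewrite /= phi0 !add0r.
Qed.

(* (a, a phi) rhobar has first coordinate a + a phi. *)
Lemma phiA_sub_A : phi @: A \subset A.
Proof.
apply/subsetP => _ /imsetP [a aA ->].
have := graph_sum_fst (rhobar_graph_sum (mem_graph_sum aA D0)); rewrite /= addr0.
by move/(subgroupD hA aA); rewrite addrA addvv add0r.
Qed.

(* (0,d) is the image of some (a, a phi + e); then d = a and d phi = d + e. *)
Lemma phiD_sub_D : phi @: D \subset D.
Proof.
apply/subsetP => _ /imsetP [d dD ->].
have /imsetP [u uU] : (0, d) \in rhobar rho @: graph_sum.
  by rewrite stable; have := mem_graph_sum A0 dD; rewrite phi0 add0r.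
case/graph_sumP: uU => a aA [e eD ->]; rewrite /rhobar /= => -[sum0 d_eq].
have a_eq : a = phi a + e := addv_eq0 (esym sum0).
have d_a : d = a by rewrite d_eq -sum0 rho0 addr0 -a_eq.
have phi_a : phi a = a + e by rewrite {2}a_eq -addrA addvv addr0.
by rewrite d_a phi_a subgroupD // -d_a.
Qed.

End GraphSum.

Theorem mainTheorem1 (n : nat) (hn : (1 <= n)%N) (rho : {perm 'rV['F_2]_n})
  (hrho_aff : ~ is_affine (fun x => rho x)) (hrho0 : rho 0 = 0)
  (U : {set 'rV['F_2]_n * 'rV['F_2]_n})
  (A B C D : {set 'rV['F_2]_n})
  (hA : is_subgroup A) (hB : is_subgroup B) (hC : is_subgroup C)
  (hD : is_subgroup D)
  (phi : 'rV['F_2]_n -> 'rV['F_2]_n) (hphi : is_hom_on A C phi)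
  (hU : U = [set (a, phi a + d) | a in A, d in D])
  (hblock : linear_block U (rhobar rho)) :
  D \subset A /\ phi @: A \subset A /\ phi @: D \subset D.
Proof.
have [_ phiD] := hphi.
have rhobar0 : rhobar rho (0, 0) = (0, 0) by rewrite /rhobar /= !addr0 hrho0 addr0.
have stable : rhobar rho @: graph_sum A D phi = graph_sum A D phi.
  apply: block_through_zero_stable rhobar0 _.
  - exact: graph_sum0.
  - exact: graph_sumD.
  - by rewrite /graph_sum -hU.
split; first by apply: D_sub_A stable.
split; first by apply: phiA_sub_A stable.
by apply: phiD_sub_D stable.
Qed.
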